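(* Let $m,n\ge1$ be natural numbers. For $j=1,2$ let $\mathcal U_j$ be a non-principal ultrafilter on $\mathbb N$ and $(a^{(j)}_i,b^{(j)}_i)_{i\in\mathbb N}$ coprime natural numbers with $2\le a^{(j)}_i<b^{(j)}_i$ such that $S^{(j)}=\prod_{\mathcal U_j}\{xa^{(j)}_i+yb^{(j)}_i\}$ is a limit 2-semigroup with generators $a^{(j)},b^{(j)}$ in which $m\,b^{(j)}=\beta_n$, and such that the residue $\mathrm{res}_m(a^{(j)})$ of $a^{(j)}$ modulo $m$ is coprime to $m$. Suppose that $S^{(1)}$ and $S^{(2)}$ have the same residues of $a$ modulo every $N\ge1$, the same value of $q_0=r(a,b)$, and, in case $q_0=0$, the same $M_a$-residues of $\alpha(b)$ modulo every $N\ge1$. Then $S^{(1)}$ and $S^{(2)}$ have the same invariants, namely: the same residues of $b$ modulo every $N$; the same $M_b$-residues of $\beta_1$, the same $M_a$-residues of $\alpha_1$ and of $\alpha(b)$ modulo every $N$; and for all $p,q\in\mathbb N$ the same truth values of the statements $p\,a<q\,b$, of $p\,b<q\,\alpha(b)+q\,a$, and of $p\,\beta_1<q\,ab$. Furthermore, in any such limit 2-semigroup, $q_0=0$ or $q_0=m/k$ for some positive integer $k$.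
   Context: A standard 2-semigroup with coprime generators $2\le a<b$ is $\{xa+yb:x,y\in\mathbb N\}$ with $+,<,0$. A limit 2-semigroup is an ultraproduct $\prod_{\mathcal U}S_i$ of standard 2-semigroups $S_i$ (generators $a_i<b_i$) over a non-principal ultrafilter, not isomorphic to a standard semigroup, with generators $a=[(a_i)]$, $b=[(b_i)]$; it is assumed that $a$ exceeds every finite multiple of the minimal positive distance between elements. All the following notions are defined in each $S_i$ and interpreted coordinatewise in the ultraproduct. $ab$ is the product; $\alpha(b)=\lfloor b/a\rfloor a$; for $1\le n<b$, $\beta_n$ is the least multiple of $b$ that is $\equiv n\pmod a$ (i.e. $kb$ with $0\le k<a$, $kb\equiv n$), and $\alpha_n=\beta_n-n$; $p\,x$ denotes $x$ added to itself $p$ times. The residue of $x$ modulo $N$ is the $r<N$ with $x\equiv r\pmod N$ (in the ultraproduct: holding for $\mathcal U$-almost all coordinates). For a multiple $x=ta\le ab$ of $a$, its $M_a$-residue modulo $N$ is $t \bmod N$; for a multiple $x=tb\le ab$ of $b$, its $M_b$-residue modulo $N$ is $t\bmod N$. The ratio $q_0=r(a,b)=\sup\{p/q: p,q\in\mathbb Z_{\ge0}, q\neq0,\ p\,b\le q\,a\}$. *)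

From mathcomp Require Import all_boot all_order all_algebra.
From mathcomp Require Import boolp classical_sets reals.
Set Implicit Arguments. Unset Strict Implicit. Unset Printing Implicit Defensive.
Import Order.TTheory GRing.Theory Num.Theory.

Local Open Scope classical_set_scope.

Definition nonprincipal_ultrafilter (U : set (set nat)) : Prop :=
  U setT /\ ~ U set0 /\
  (forall A B, U A -> U B -> U (A `&` B)) /\
  (forall A B, A `<=` B -> U A -> U B) /\
  (forall A, U A \/ U (~` A)) /\
  (forall k : nat, ~ U [set k]).

(** A first-order property of the ultraproduct that is evaluated
    coordinatewise holds iff it holds for U-almost all coordinates. *)
Definition uholds (U : set (set nat)) (P : nat -> Prop) : Prop := U [set i | P i].

Definition std2 (a b : nat) : Prop := [/\ (2 <= a)%N, (a < b)%N & coprime a b].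

Definition inS (a b x : nat) : Prop := exists u v : nat, x = (u * a + v * b)%N.

(** Limit 2-semigroup data: prod_U {x a_i + y b_i}, where a exceeds every finite
    multiple of the minimal positive distance between elements (i.e. for every
    standard k, k * (minimal positive distance) < a). *)
Definition limit2sg (U : set (set nat)) (a b : nat -> nat) : Prop :=
  [/\ nonprincipal_ultrafilter U,
      (forall i, std2 (a i) (b i))
    & (forall k : nat, uholds U (fun i => exists x y,
          [/\ inS (a i) (b i) x, inS (a i) (b i) y, (x < y)%N
            & (k * (y - x) < a i)%N]))].

(** beta_n = k b with k the least natural number (necessarily < a) such that
    k b = n (mod a); [betak] is this k. *)
Definition betak (a b n : nat) : nat :=
  find (fun k => k * b %% a == n %% a) (iota 0 a).
Definition beta (a b n : nat) : nat := (betak a b n * b)%N.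
Definition alpha (a b n : nat) : nat := (beta a b n - n)%N.
Definition alphab (a b : nat) : nat := (b %/ a * a)%N.

Definition ures (U : set (set nat)) (x : nat -> nat) (N r : nat) : Prop :=
  (r < N)%N /\ uholds U (fun i => x i %% N = r).

(** M_a-residue of a multiple x = t a (<= ab): the t-sequence is given;
    M_a-coefficients used below: alpha(b) = (b %/ a) a, alpha_1 = ((beta_1 - 1) %/ a) a.
    M_b-coefficient of beta_1 = k b is k = betak a b 1. *)
Definition Ma_alphab (a b : nat -> nat) : nat -> nat := fun i => (b i %/ a i)%N.
Definition Ma_alpha1 (a b : nat -> nat) : nat -> nat :=
  fun i => (alpha (a i) (b i) 1 %/ a i)%N.
Definition Mb_beta1 (a b : nat -> nat) : nat -> nat := fun i => betak (a i) (b i) 1.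

Definition q0 (R : realType) (U : set (set nat)) (a b : nat -> nat) : R :=
  sup [set x : R | exists p q : nat, [/\ (0 < q)%N,
        x = (p%:R / q%:R)%R & uholds U (fun i => (p * b i <= q * a i)%N)]].

Definition prop53_hyp (m n : nat) (U : set (set nat)) (a b : nat -> nat) : Prop :=
  [/\ limit2sg U a b,
      uholds U (fun i => (m * b i)%N = beta (a i) (b i) n)
    & exists r, ures U a m r /\ coprime r m].

Definition same_res (U1 : set (set nat)) (x1 : nat -> nat)
                    (U2 : set (set nat)) (x2 : nat -> nat) : Prop :=
  forall N r : nat, (0 < N)%N -> (ures U1 x1 N r <-> ures U2 x2 N r).

Definition same_invariants (U1 : set (set nat)) (a1 b1 : nat -> nat)
                           (U2 : set (set nat)) (a2 b2 : nat -> nat) : Prop :=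
  same_res U1 b1 U2 b2 /\
  same_res U1 (Mb_beta1 a1 b1) U2 (Mb_beta1 a2 b2) /\
  same_res U1 (Ma_alpha1 a1 b1) U2 (Ma_alpha1 a2 b2) /\
  same_res U1 (Ma_alphab a1 b1) U2 (Ma_alphab a2 b2) /\
  [/\ (forall p q : nat, uholds U1 (fun i => (p * a1 i < q * b1 i)%N)
                     <-> uholds U2 (fun i => (p * a2 i < q * b2 i)%N)),
      (forall p q : nat,
          uholds U1 (fun i => (p * b1 i < q * alphab (a1 i) (b1 i) + q * a1 i)%N)
      <-> uholds U2 (fun i => (p * b2 i < q * alphab (a2 i) (b2 i) + q * a2 i)%N))
    & (forall p q : nat,
          uholds U1 (fun i => (p * beta (a1 i) (b1 i) 1 < q * (a1 i * b1 i))%N)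
      <-> uholds U2 (fun i => (p * beta (a2 i) (b2 i) 1 < q * (a2 i * b2 i))%N))].

From mathcomp Require Import all_boot all_order all_algebra.
From mathcomp Require Import boolp classical_sets reals.
From mathcomp Require Import zify ring.
Import Order.TTheory GRing.Theory Num.Theory.
Set Implicit Arguments. Unset Strict Implicit.

(* Since [m b = beta_n = n (mod a)], write [m b = t a + n]; let [k < a] be the inverse of
   [b] modulo [a], so [k b = s a + 1]; then [k n = u a + m] with [u < n]
   ([t], [k], [u] are [mb_quo], [binv], [kn_quo]).  Every invariant is explicit in [a], [t]
   and [u]: [b = (t a + n) / m], [b / a = t / m], [k = (u a + m) / n], [s = (u + t k) / m],
   and as [a] is infinitely large the order relations reduce to relations between [p], [q]
   and [t] or [u].  In the ultraproduct [t] is either a standard [k0 > 0], and then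
   [q0 = m / k0], or infinite, and then [q0 = 0].  So equal [q0] gives equal [t] in the
   first case; in the second [t] is recovered from [t / m], the [M_a]-coefficient of
   [alpha(b)], and from [t a + n = 0 (mod m)], since [a] is invertible modulo [m].  Finally
   [u] is the only [u < n] making [(m + a u) / n] and [(u + t (m + a u) / n) / m] integers,
   so it is determined by the residues of [a] and [t]. *)

(** * Arithmetic of a standard 2-semigroup *)

Lemma betak_lt a b n : (exists2 k, k < a & k * b %% a = n %% a) -> betak a b n < a.
Proof.
case=> k ka kP; have hs : has (fun k => k * b %% a == n %% a) (iota 0 a).
  by apply/hasP; exists k; rewrite ?mem_iota //; apply/eqP.
by move: hs; rewrite has_find size_iota.
Qed.

Lemma betakP a b n : betak a b n < a -> betak a b n * b %% a = n %% a.
Proof.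
move=> lt; have hs : has (fun k => k * b %% a == n %% a) (iota 0 a).
  by rewrite has_find size_iota.
by have /eqP := nth_find 0 hs; rewrite nth_iota // add0n.
Qed.

Lemma mod_inverse_exists a b : 1 < a -> coprime a b ->
  exists2 k, k < a & k * b %% a = 1 %% a.
Proof.
move=> a1 cab; have [x xa] := Bezoutr b (ltnW a1).
rewrite gcdnC (eqP cab) => dv.
have x0 : 0 < x.
  by case: x xa dv => // _; rewrite mul0n addn0 dvdn1 => /eqP; lia.
exists (a - x); first lia.
have e : (a - x) * b + (1 + x * b) = a * b + 1.
  have : x * b <= a * b by rewrite leq_mul2r ltnW ?orbT.
  by rewrite mulnBl; lia.
apply/eqP; rewrite -(eqn_modDr (1 + x * b)) e.
by apply/eqP; rewrite -[in RHS]modnDmr (eqP dv) addn0 -modnDml modnMr add0n.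
Qed.

Lemma coprime_mul_mod_inj d c x y : coprime d c -> x < d -> y < d ->
  x * c = y * c %[mod d] -> x = y.
Proof.
move=> cop; wlog xy : x y / x <= y.
  by move=> H xd yd e; case: (leqP x y) => h; [exact: H | symmetry; apply: H => //; lia].
move=> xd yd /eqP e.
have : d %| (y - x) * c by rewrite mulnBl -eqn_mod_dvd ?leq_mul2r ?xy ?orbT // eq_sym.
rewrite Gauss_dvdl // => dv.
case: (posnP (y - x)) => h; first lia.
by have := dvdn_leq h dv; lia.
Qed.

Definition prop53_std (m n a b : nat) := [/\ m < a, n < a, std2 a b & m * b = beta a b n].

Definition mb_quo (m a b : nat) := m * b %/ a.
Definition binv (a b : nat) := betak a b 1.
Definition kn_quo (n a b : nat) := binv a b * n %/ a.

Lemma binv_lt a b : std2 a b -> binv a b < a.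
Proof. by case=> a1 _ cab; apply/betak_lt/mod_inverse_exists. Qed.

Lemma binvP a b : std2 a b -> binv a b * b = (binv a b * b %/ a) * a + 1.
Proof.
move=> sab; have [a1 _ _] := sab.
by rewrite {1}(divn_eq (binv a b * b) a) betakP ?binv_lt // modn_small.
Qed.

Section StdCoordinates.
Context {m n a b : nat}.
Hypotheses (m0 : 0 < m) (n0 : 0 < n) (Hstd : prop53_std m n a b).

Let t := mb_quo m a b.
Let k := binv a b.
Let u := kn_quo n a b.
Let s := k * b %/ a.

Lemma mb_quoP : m * b = t * a + n.
Proof.
case: Hstd => ma na [_ ab _] hb.
have bm : betak a b n = m by apply/eqP; rewrite -(eqn_pmul2r (_ : 0 < b)) ?hb //; lia.
rewrite /t /mb_quo {1}(divn_eq (m * b) a); congr (_ + _).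
by rewrite -bm betakP ?bm // modn_small.
Qed.

Let sab : std2 a b. Proof. by case: Hstd. Qed.
Let k_lt : k < a := binv_lt sab.
Let k_b : k * b = s * a + 1 := binvP sab.

Let k_mb : k * n + (k * t) * a = m + (m * s) * a.
Proof.
have : k * (m * b) = m * (k * b) by rewrite mulnCA.
by rewrite mb_quoP k_b; nia.
Qed.

Lemma kn_quoP : k * n = u * a + m.
Proof.
case: Hstd => ma _ _ _.
rewrite /u /kn_quo {1}(divn_eq (k * n) a); congr (_ + _).
by rewrite -(modnMDl (k * t)) addnC k_mb addnC modnMDl modn_small.
Qed.

Lemma kn_quo_lt : u < n.
Proof.
have a0 : 0 < a by lia.
rewrite -(ltn_pmul2r a0).
have : k * n < a * n by rewrite ltn_pmul2r.
by have := kn_quoP; lia.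
Qed.

Lemma alpha1_quoP : alpha a b 1 %/ a * m = u + t * k.
Proof.
case: Hstd => _ _ [a1 _ _] _.
rewrite /alpha /beta -/(binv a b) -/k k_b addnK mulnK; last lia.
have : (u + t * k) * a + m = (s * m) * a + m by have := k_mb; rewrite kn_quoP; nia.
by move/addIn/eqP; rewrite eqn_pmul2r ?(ltnW a1) // => /eqP.
Qed.

Lemma alphab_quoE : b %/ a = t %/ m.
Proof.
case: Hstd => ma na _ _.
rewrite -(divnMl m0) mb_quoP {1}(divn_eq t m).
have tm : t %% m < m by rewrite ltn_mod.
have -> : (t %/ m * m + t %% m) * a + n = (t %% m * a + n) + t %/ m * (m * a) by lia.
rewrite divnDMl ?muln_gt0 ?m0 /=; last lia.
rewrite divn_small ?add0n //.
have : (t %% m).+1 * a <= m * a by rewrite leq_mul2r tm orbT.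
lia.
Qed.

Lemma kn_quo_unique u' : u' < n -> n %| m + a * u' ->
  m %| u' + t * ((m + a * u') %/ n) -> u' = u.
Proof.
case: Hstd => ma na [a1 ab cab] _ un d1 d2.
set K := (m + a * u') %/ n in d2.
have eK : K * n = m + a * u' by rewrite divnK.
set S := (u' + t * K) %/ m.
have eS : S * m = u' + t * K by rewrite divnK.
have Kl : K < a.
  rewrite -(ltn_pmul2r n0) eK.
  have : a * u' + a <= a * n by rewrite addnC -mulnS leq_mul2l un orbT.
  lia.
have eKb : K * b = S * a + 1.
  apply/eqP; rewrite -(eqn_pmul2l m0); apply/eqP.
  have -> : m * (K * b) = K * (m * b) by rewrite mulnCA.
  rewrite mb_quoP mulnDr eK.
  by have := congr1 (muln a) eS; nia.
have KK : K = k.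
  apply: (coprime_mul_mod_inj cab Kl k_lt).
  by rewrite eKb k_b !modnMDl.
have : a * u' = a * u by have := kn_quoP; rewrite -KK eK; lia.
by move/eqP; rewrite eqn_pmul2l ?(ltnW a1) // => /eqP.
Qed.

End StdCoordinates.

Section Comparisons.
Context {m n a b p q : nat}.
Hypothesis m0 : 0 < m.

Lemma ltn_pa_qb_large_a k : 0 < n -> m * b = k * a + n -> q * n < a ->
  (p * a < q * b) <-> (0 < q /\ m * p <= q * k).
Proof.
move=> n0 e qa.
have -> : (p * a < q * b) = (m * p * a < q * (k * a + n)).
  by rewrite -e -[in LHS](ltn_pmul2l m0); congr (_ < _); lia.
split.
- move=> h; split; first by case: q h {qa} => //; rewrite mul0n ltn0.
  rewrite leqNgt; apply/negP => h2.
  have : (q * k).+1 * a <= m * p * a by rewrite leq_mul2r h2 orbT.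
  lia.
- case=> q0 h.
  have : m * p * a <= q * k * a by rewrite leq_mul2r h orbT.
  have : 0 < q * n by rewrite muln_gt0 q0.
  lia.
Qed.

Lemma ltn_pa_qb_large_t t : m * b = t * a + n -> m * p < t -> 0 < a ->
  (p * a < q * b) <-> (0 < q).
Proof.
move=> e tp a0.
have -> : (p * a < q * b) = (m * p * a < q * (t * a + n)).
  by rewrite -e -[in LHS](ltn_pmul2l m0); congr (_ < _); lia.
split; first by case: q => //; rewrite mul0n ltn0.
move=> q0.
have : m * p * a < t * a by rewrite ltn_pmul2r.
have : t * a <= q * (t * a) by rewrite leq_pmull.
lia.
Qed.

Lemma ltn_pb_alphab_large_a k : m * b = k * a + n -> p * n < a -> b %/ a = k %/ m ->
  (p * b < q * (b %/ a * a) + q * a) <-> (p * k < m * q * (k %/ m + 1)).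
Proof.
move=> e pa ->.
have -> : (p * b < q * (k %/ m * a) + q * a) = (p * (k * a + n) < m * q * (k %/ m + 1) * a).
  by rewrite -e -[in LHS](ltn_pmul2l m0); congr (_ < _); lia.
move: (k %/ m) => d; split.
- move=> h; rewrite ltnNge; apply/negP => h2.
  have : m * q * (d + 1) * a <= p * k * a by rewrite leq_mul2r h2 orbT.
  lia.
- move=> h.
  have : (p * k).+1 * a <= m * q * (d + 1) * a by rewrite leq_mul2r h orbT.
  lia.
Qed.

Lemma ltn_pb_alphab_large_t t : m * b = t * a + n -> n < a -> q * m < t ->
  b %/ a = t %/ m -> (p * b < q * (b %/ a * a) + q * a) <-> (0 < q /\ p <= q).
Proof.
move=> e na tq ->.
have -> : (p * b < q * (t %/ m * a) + q * a) = (p * (t * a + n) < m * q * (t %/ m + 1) * a).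
  by rewrite -e -[in LHS](ltn_pmul2l m0); congr (_ < _); lia.
have td := divn_eq t m; have tm : t %% m < m by rewrite ltn_mod.
move: (t %/ m) (t %% m) td tm => d r td tm.
split.
- move=> h.
  have q0 : 0 < q by case: q h {tq} => //; rewrite !muln0 mul0n ltn0.
  split => //; rewrite leqNgt; apply/negP => h2.
  have h3 : (q + 1) * t <= p * t by rewrite leq_mul2r addn1 h2 orbT.
  have h4 : m * q * (d + 1) <= (q + 1) * t.
    have : q * m + q * (d * m) <= q * t + t by nia.
    lia.
  have : m * q * (d + 1) * a <= p * t * a by rewrite leq_mul2r (leq_trans h4 h3) orbT.
  lia.
- case=> q0 pq.
  have h1 : p * (t * a + n) <= q * (t * a + n) by rewrite leq_mul2r pq orbT.
  have h4 : q * (t * a + n) < q * ((t + 1) * a) by rewrite ltn_pmul2l //; lia.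
  have h5 : q * ((t + 1) * a) <= q * (m * (d + 1) * a).
    by rewrite leq_mul2l leq_mul2r (_ : t + 1 <= m * (d + 1)) ?orbT //; lia.
  lia.
Qed.

Lemma ltn_beta1_ab k u : 0 < n -> 0 < b -> k * n = u * a + m -> p * m < a ->
  (p * (k * b) < q * (a * b)) <-> (p * u < q * n).
Proof.
move=> n0 b0 e pa.
rewrite !mulnA ltn_pmul2r // -(ltn_pmul2r n0) -mulnA e.
split.
- move=> h; rewrite ltnNge; apply/negP => h2.
  have : q * n * a <= p * u * a by rewrite leq_mul2r h2 orbT.
  lia.
- move=> h.
  have : (p * u).+1 * a <= q * n * a by rewrite leq_mul2r h orbT.
  lia.
Qed.

End Comparisons.

(** * Ultraproducts *)

Section Ultrafilter.
Variable U : set (set nat).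
Hypothesis HU : nonprincipal_ultrafilter U.

Lemma uholds_mono (P Q : nat -> Prop) : (forall i, P i -> Q i) -> uholds U P -> uholds U Q.
Proof. by case: HU => [_ [_ [_ [hm _]]]] h; apply: hm => i /h. Qed.

Lemma uholds_all (P : nat -> Prop) : (forall i, P i) -> uholds U P.
Proof. by case: HU => [hT _] h; apply: uholds_mono hT => i _; apply: h. Qed.

Lemma uholds_and (P Q : nat -> Prop) :
  uholds U P -> uholds U Q -> uholds U (fun i => P i /\ Q i).
Proof. by case: HU => [_ [_ [hI _]]]; apply: hI. Qed.

Lemma uholds_ex (P : nat -> Prop) : uholds U P -> exists i, P i.
Proof.
move=> h; apply: contrapT => hn; case: HU => [_ [h0 _]]; apply: h0.
by apply: uholds_mono h => i Pi; apply: hn; exists i.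
Qed.

Lemma uholds_em (P : nat -> Prop) : uholds U P \/ uholds U (fun i => ~ P i).
Proof. by case: HU => [_ [_ [_ [_ [hc _]]]]]; apply: hc. Qed.

Lemma uholds_iff (P Q : nat -> Prop) :
  uholds U (fun i => P i <-> Q i) -> (uholds U P <-> uholds U Q).
Proof. by move=> h; split=> h'; apply: uholds_mono (uholds_and h h') => i [->]. Qed.

Lemma uholds_ext (P Q : nat -> Prop) :
  (forall i, P i <-> Q i) -> (uholds U P <-> uholds U Q).
Proof. by move=> h; apply/uholds_iff/uholds_all. Qed.

Lemma uholds_const (c : Prop) : uholds U (fun _ => c) <-> c.
Proof. by split=> [/uholds_ex [] | hc]; last apply: uholds_all. Qed.

Lemma uholds_bounded (f : nat -> nat) K :
  uholds U (fun i => f i < K) -> exists2 v, v < K & uholds U (fun i => f i = v).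
Proof.
elim: K => [/uholds_ex [] // | K IH h].
case: (uholds_em (fun i => f i = K)) => hK; first by exists K.
have [v vK hv] : exists2 v, v < K & uholds U (fun i => f i = v).
  by apply: IH; apply: uholds_mono (uholds_and h hK) => i []; lia.
by exists v => //; lia.
Qed.

Lemma uholds_eq_const (f : nat -> nat) v (Q : nat -> Prop) :
  uholds U (fun i => f i = v) -> (uholds U (fun i => Q (f i)) <-> Q v).
Proof.
move=> hv; rewrite -(uholds_const (Q v)); apply: uholds_iff.
by apply: uholds_mono hv => i ->.
Qed.

Lemma uholds_eq_const2 (f g : nat -> nat) v w (Q : nat -> nat -> Prop) :
  uholds U (fun i => f i = v) -> uholds U (fun i => g i = w) ->
  (uholds U (fun i => Q (f i) (g i)) <-> Q v w).
Proof.
move=> hv hw; rewrite -(uholds_const (Q v w)); apply: uholds_iff.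
by apply: uholds_mono (uholds_and hv hw) => i [-> ->].
Qed.

Lemma uholds_const_or_unbounded (f : nat -> nat) :
  (exists k, uholds U (fun i => f i = k)) \/ (forall K, uholds U (fun i => K < f i)).
Proof.
case: (pselect (exists k, uholds U (fun i => f i = k))) => hk; [by left | right].
suff H K : uholds U (fun i => K <= f i) by move=> K; apply: H K.+1.
elim: K => [|K IH]; first exact: uholds_all.
have hn : uholds U (fun i => f i <> K).
  by case: (uholds_em (fun i => f i = K)) => // h; case: hk; exists K.
by apply: uholds_mono (uholds_and IH hn) => i []; lia.
Qed.

End Ultrafilter.

Section SameResidues.
Variables U1 U2 : set (set nat).
Hypotheses (HU1 : nonprincipal_ultrafilter U1) (HU2 : nonprincipal_ultrafilter U2).

Lemma same_res_fwd f1 f2 N r : same_res U1 f1 U2 f2 -> 0 < N ->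
  uholds U1 (fun i => f1 i %% N = r) -> uholds U2 (fun i => f2 i %% N = r).
Proof.
move=> h N0 h1.
have rN : r < N by have [i <-] := uholds_ex HU1 h1; rewrite ltn_mod.
by have [] := (h N r N0).1.
Qed.

Lemma same_res_of_const f1 f2 v : uholds U1 (fun i => f1 i = v) ->
  uholds U2 (fun i => f2 i = v) -> same_res U1 f1 U2 f2.
Proof.
move=> h1 h2 N r _; rewrite /ures.
rewrite (uholds_eq_const HU1 (fun x => x %% N = r) h1).
by rewrite (uholds_eq_const HU2 (fun x => x %% N = r) h2).
Qed.

Lemma same_res_const c : same_res U1 (fun _ => c) U2 (fun _ => c).
Proof. by apply: (same_res_of_const (v := c)); apply: uholds_all. Qed.

Lemma same_res_eq f1 f2 g1 g2 : uholds U1 (fun i => f1 i = g1 i) ->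
  uholds U2 (fun i => f2 i = g2 i) -> same_res U1 f1 U2 f2 <-> same_res U1 g1 U2 g2.
Proof.
move=> e1 e2.
have E U f g N r : nonprincipal_ultrafilter U -> uholds U (fun i => f i = g i) ->
    ures U f N r <-> ures U g N r.
  move=> HU e; have fg : uholds U (fun i => f i %% N = r <-> g i %% N = r).
    by apply: (uholds_mono HU) e => i ->.
  by rewrite /ures (uholds_iff HU fg).
by split=> h N r N0; move: (h N r N0); rewrite (E _ _ _ N r HU1 e1) (E _ _ _ N r HU2 e2).
Qed.

Lemma same_res_pred f1 f2 g1 g2 N : same_res U1 f1 U2 f2 -> same_res U1 g1 U2 g2 -> 0 < N ->
  forall Q : nat -> nat -> Prop, uholds U1 (fun i => Q (f1 i %% N) (g1 i %% N)) <->
                                 uholds U2 (fun i => Q (f2 i %% N) (g2 i %% N)).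
Proof.
move=> hf hg N0 Q.
have ltN h : uholds U1 (fun i => h i %% N < N) by apply: (uholds_all HU1) => i; rewrite ltn_mod.
have [x _ hx] := uholds_bounded HU1 (ltN f1).
have [y _ hy] := uholds_bounded HU1 (ltN g1).
rewrite (uholds_eq_const2 HU1 Q hx hy).
by rewrite (uholds_eq_const2 HU2 Q (same_res_fwd hf N0 hx) (same_res_fwd hg N0 hy)).
Qed.

Lemma same_res_binop f1 f2 g1 g2 (op : nat -> nat -> nat) :
  (forall x y N, op x y %% N = op (x %% N) (y %% N) %% N) ->
  same_res U1 f1 U2 f2 -> same_res U1 g1 U2 g2 ->
  same_res U1 (fun i => op (f1 i) (g1 i)) U2 (fun i => op (f2 i) (g2 i)).
Proof.
move=> hop hf hg N r N0.
have E U f g : nonprincipal_ultrafilter U ->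
    uholds U (fun i => op (f i %% N) (g i %% N) %% N = r) <->
    uholds U (fun i => op (f i) (g i) %% N = r).
  by move=> HU; apply: uholds_ext => // i; rewrite -hop.
rewrite /ures -(E U1) // -(E U2) //; apply: and_iff_compat_l.
exact: (same_res_pred hf hg N0 (fun x y => op x y %% N = r)).
Qed.

Lemma same_res_add f1 f2 g1 g2 : same_res U1 f1 U2 f2 -> same_res U1 g1 U2 g2 ->
  same_res U1 (fun i => f1 i + g1 i) U2 (fun i => f2 i + g2 i).
Proof. by apply: same_res_binop => x y N; rewrite modnDm. Qed.

Lemma same_res_mul f1 f2 g1 g2 : same_res U1 f1 U2 f2 -> same_res U1 g1 U2 g2 ->
  same_res U1 (fun i => f1 i * g1 i) U2 (fun i => f2 i * g2 i).
Proof. by apply: same_res_binop => x y N; rewrite modnMm. Qed.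

(* [(x %/ d) %% N] is read off [x %% (N * d)]. *)
Lemma same_res_divn f1 f2 d : 0 < d -> same_res U1 f1 U2 f2 ->
  same_res U1 (fun i => f1 i %/ d) U2 (fun i => f2 i %/ d).
Proof.
move=> d0 hf N r N0.
have E U f : nonprincipal_ultrafilter U ->
    uholds U (fun i => f i %% (N * d) %/ d = r) <-> uholds U (fun i => f i %/ d %% N = r).
  by move=> HU; apply: uholds_ext => // i; rewrite modn_divl.
rewrite /ures -(E U1) // -(E U2) //; apply: and_iff_compat_l.
by apply: (same_res_pred hf hf (_ : 0 < N * d) (fun x _ => x %/ d = r)); rewrite muln_gt0 N0.
Qed.

End SameResidues.

(** * One limit 2-semigroup *)

Lemma sup_eq_ubound_approx (R : realType) (S : set R) (c : R) : ubound S c ->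
  (forall e, 0 < e -> exists2 x, S x & c - e <= x)%R -> sup S = c.
Proof.
move=> ub approx; have [x Sx _] := approx 1%R ltr01.
apply/le_anti/andP; split; first by apply: ge_sup => //; exists x.
apply/ler_addgt0Pr => e e0; have [y Sy le_y] := approx e e0.
by rewrite -lerBlDr (le_trans le_y) // ub_le_sup //; exists c.
Qed.

Definition ratio_set (R : realType) (U : set (set nat)) (a b : nat -> nat) : set R :=
  [set x : R | exists p q : nat, [/\ (0 < q)%N,
      x = (p%:R / q%:R)%R & uholds U (fun i => (p * b i <= q * a i)%N)]].
Arguments ratio_set : clear implicits.

Lemma q0E R U a b : q0 R U a b = sup (ratio_set R U a b).
Proof. by []. Qed.

Section LimitSemigroup.
Context {R : realType} {m n : nat} {U : set (set nat)} {a b : nat -> nat}.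
Hypotheses (m0 : 0 < m) (n0 : 0 < n) (h : prop53_hyp m n U a b).

Lemma prop53_hyp_uf : nonprincipal_ultrafilter U.
Proof. by case: h => [[]]. Qed.

Let HU := prop53_hyp_uf.

(* The minimal positive distance is at least 1, so [a] is infinitely large. *)
Lemma prop53_hyp_large K : uholds U (fun i => K < a i).
Proof.
case: h => [[_ _ big] _ _].
apply: (uholds_mono HU) (big K) => i [x [y [_ _ xy lt]]].
have : K <= K * (y - x) by rewrite leq_pmulr // subn_gt0.
lia.
Qed.

Lemma prop53_hyp_std : uholds U (fun i => prop53_std m n (a i) (b i)).
Proof.
case: (h) => [[_ sab _] hb _].
have large_mn := uholds_and HU (prop53_hyp_large m) (prop53_hyp_large n).
apply: (uholds_mono HU) (uholds_and HU large_mn hb).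
by move=> i [[ma na] e]; split=> //; apply: sab.
Qed.

Lemma uholds_std_mono K (Q P : nat -> Prop) : uholds U Q ->
  (forall i, prop53_std m n (a i) (b i) -> K < a i -> Q i -> P i) -> uholds U P.
Proof.
move=> hQ hP.
apply: (uholds_mono HU) (uholds_and HU (uholds_and HU prop53_hyp_std (prop53_hyp_large K)) hQ).
by move=> i [[]]; apply: hP.
Qed.

Lemma uholds_coords :
  [/\ uholds U (fun i => (mb_quo m (a i) (b i) * a i + n) %/ m = b i),
      uholds U (fun i => mb_quo m (a i) (b i) %/ m = Ma_alphab a b i),
      uholds U (fun i => (kn_quo n (a i) (b i) * a i + m) %/ n = Mb_beta1 a b i),
      uholds U (fun i => (kn_quo n (a i) (b i) + mb_quo m (a i) (b i) * binv (a i) (b i)) %/ m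
                         = Ma_alpha1 a b i)
    & uholds U (fun i => kn_quo n (a i) (b i) < n)].
Proof.
split; apply: (uholds_std_mono (K := 0) (uholds_all HU (fun _ => I))) => i hi _ _.
- by rewrite -(mb_quoP m0 n0 hi) mulKn.
- by rewrite /Ma_alphab (alphab_quoE m0 n0 hi).
- by rewrite -(kn_quoP m0 n0 hi) mulnK.
- by rewrite /Ma_alpha1 -(alpha1_quoP m0 n0 hi) mulnK.
- exact: kn_quo_lt m0 n0 hi.
Qed.

Lemma uholds_ltn_pa_qb_fixed k p q : uholds U (fun i => mb_quo m (a i) (b i) = k) ->
  uholds U (fun i => p * a i < q * b i) <-> (0 < q /\ m * p <= q * k).
Proof.
move=> hk; rewrite -(uholds_const HU (0 < q /\ _)); apply: (uholds_iff HU).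
apply: (uholds_std_mono (K := q * n) hk) => i hi qa ti.
by rewrite -ti; apply: (ltn_pa_qb_large_a m0 n0 (mb_quoP m0 n0 hi) qa).
Qed.

Lemma uholds_ltn_pb_alphab_fixed k p q : uholds U (fun i => mb_quo m (a i) (b i) = k) ->
  uholds U (fun i => p * b i < q * alphab (a i) (b i) + q * a i) <->
  (p * k < m * q * (k %/ m + 1)).
Proof.
move=> hk; rewrite -(uholds_const HU (_ < _)); apply: (uholds_iff HU).
apply: (uholds_std_mono (K := p * n) hk) => i hi pa ti.
by rewrite -ti; apply: (ltn_pb_alphab_large_a m0 (mb_quoP m0 n0 hi) pa (alphab_quoE m0 n0 hi)).
Qed.

Lemma uholds_ltn_pa_qb_unbounded p q :
  (forall K, uholds U (fun i => K < mb_quo m (a i) (b i))) ->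
  uholds U (fun i => p * a i < q * b i) <-> 0 < q.
Proof.
move=> ht; rewrite -(uholds_const HU (0 < q)); apply: (uholds_iff HU).
apply: (uholds_std_mono (K := 0) (ht (m * p))) => i hi a0 tp.
exact: (ltn_pa_qb_large_t m0 (mb_quoP m0 n0 hi) tp a0).
Qed.

Lemma uholds_ltn_pb_alphab_unbounded p q :
  (forall K, uholds U (fun i => K < mb_quo m (a i) (b i))) ->
  uholds U (fun i => p * b i < q * alphab (a i) (b i) + q * a i) <-> (0 < q /\ p <= q).
Proof.
move=> ht; rewrite -(uholds_const HU (0 < q /\ p <= q)); apply: (uholds_iff HU).
apply: (uholds_std_mono (K := 0) (ht (q * m))) => i hi _ tq.
apply: (ltn_pb_alphab_large_t m0 (mb_quoP m0 n0 hi) _ tq (alphab_quoE m0 n0 hi)).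
by case: hi.
Qed.

Lemma uholds_ltn_beta1_ab v p q : uholds U (fun i => kn_quo n (a i) (b i) = v) ->
  uholds U (fun i => p * beta (a i) (b i) 1 < q * (a i * b i)) <-> p * v < q * n.
Proof.
move=> hv; rewrite -(uholds_const HU (_ < _)); apply: (uholds_iff HU).
apply: (uholds_std_mono (K := p * m) hv) => i hi pa <-.
apply: (ltn_beta1_ab m0 n0 _ (kn_quoP m0 n0 hi) pa).
by case: hi => _ _ [] _ ab _ _; lia.
Qed.

Lemma mb_quo_mod_eq r y : uholds U (fun i => a i %% m = r) ->
  uholds U (fun i => mb_quo m (a i) (b i) %% m = y) -> y * r + n = 0 %[mod m].
Proof.
move=> hr hy.
have [i [[hi ai] ti]] := uholds_ex HU (uholds_and HU (uholds_and HU prop53_hyp_std hr) hy).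
have : m * b i = 0 %[mod m] by rewrite modnMr mod0n.
by rewrite (mb_quoP m0 n0 hi) -modnDml -modnMm ai ti modnDml.
Qed.

Lemma mb_quo_fixed_gt0 k : uholds U (fun i => mb_quo m (a i) (b i) = k) -> 0 < k.
Proof.
move=> hk; have [i [hi ti]] := uholds_ex HU (uholds_and HU prop53_hyp_std hk).
have := mb_quoP m0 n0 hi; rewrite ti; case: hi => _ na [_ ab _] _.
have : b i <= m * b i by rewrite leq_pmull.
by case: k {hk ti} => // ; lia.
Qed.

Lemma ratio_set0 : ratio_set R U a b 0%R.
Proof.
exists 0, 1; split=> //; first by rewrite mul0r.
by apply: (uholds_all HU) => i; rewrite mul0n.
Qed.

Lemma ratio_set_fixed_ub k : uholds U (fun i => mb_quo m (a i) (b i) = k) ->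
  ubound (ratio_set R U a b) (m%:R / k%:R)%R.
Proof.
move=> hk x [p [q [q0 -> hpq]]]; have k0 := mb_quo_fixed_gt0 hk.
rewrite ler_pdivrMr ?ltr0n // mulrAC ler_pdivlMr ?ltr0n // -!natrM ler_nat.
have [i [[hi ti] le_pq]] := uholds_ex HU (uholds_and HU (uholds_and HU prop53_hyp_std hk) hpq).
have a0 : 0 < a i by case: hi => ma _ _ _; lia.
rewrite -(leq_pmul2r a0).
have : p * (m * b i) <= m * (q * a i) by rewrite mulnCA leq_mul2l le_pq orbT.
by rewrite (mb_quoP m0 n0 hi) ti; nia.
Qed.

Lemma ratio_set_fixed_approx k N : uholds U (fun i => mb_quo m (a i) (b i) = k) -> 0 < N ->
  ratio_set R U a b (m%:R / k%:R - (k * N)%:R^-1)%R.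
Proof.
move=> hk N0; have k0 := mb_quo_fixed_gt0 hk.
exists (m * N - 1), (k * N); split; first by rewrite muln_gt0 k0.
  rewrite natrB ?muln_gt0 ?m0 // !natrM; field.
  by rewrite !pnatr_eq0 -!lt0n k0 N0.
apply: (uholds_std_mono (K := N * n) hk) => i hi Nn ti.
have := mb_quoP m0 n0 hi; rewrite ti => e.
have : N * (m * b i) = N * (k * a i + n) by rewrite e.
case: hi => _ _ [_ ab _] _; rewrite mulnBl mul1n; lia.
Qed.

Lemma q0_fixed k : uholds U (fun i => mb_quo m (a i) (b i) = k) ->
  q0 R U a b = (m%:R / k%:R)%R.
Proof.
move=> hk; rewrite q0E; apply: sup_eq_ubound_approx (ratio_set_fixed_ub hk) _ => e e0.
have k0 := mb_quo_fixed_gt0 hk.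
have einv : (0 < e^-1)%R by rewrite invr_gt0.
set N := Num.bound e^-1; have eN : (e^-1 < N%:R)%R := archi_boundP (ltW einv).
have N0 : 0 < N by rewrite -(ltr0n R); apply: lt_trans eN.
exists (m%:R / k%:R - (k * N)%:R^-1)%R; first exact: ratio_set_fixed_approx.
rewrite lerD2l lerN2 -[leRHS]invrK lef_pV2 ?posrE ?ltr0n ?muln_gt0 ?k0 //.
by rewrite (le_trans (ltW eN)) // ler_nat leq_pmull.
Qed.

Lemma ratio_set_unbounded : (forall K, uholds U (fun i => K < mb_quo m (a i) (b i))) ->
  ratio_set R U a b = [set 0%R]%classic.
Proof.
move=> ht; apply/seteqP; split=> [x [p [q [q0 -> hpq]]] | x ->]; last exact: ratio_set0.
case: p hpq => [|p] hpq; first by rewrite mul0r.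
have [i [[hi tq] le_pq]] :=
  uholds_ex HU (uholds_and HU (uholds_and HU prop53_hyp_std (ht (q * m))) hpq).
have e := mb_quoP m0 n0 hi; case: hi => _ _ [_ ab _] _.
have h1 : m * b i <= m * (p.+1 * b i) by rewrite leq_mul2l leq_pmull ?orbT.
have h2 : m * (p.+1 * b i) <= m * (q * a i) by rewrite leq_mul2l le_pq orbT.
have h3 : q * m * a i < mb_quo m (a i) (b i) * a i by rewrite ltn_pmul2r //; lia.
lia.
Qed.

Lemma q0_unbounded : (forall K, uholds U (fun i => K < mb_quo m (a i) (b i))) ->
  q0 R U a b = 0%R.
Proof. by move=> ht; rewrite q0E ratio_set_unbounded // sup1. Qed.

End LimitSemigroup.

(** * Two limit 2-semigroups *)

Section TwoLimitSemigroups.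
Context {m n : nat} {U1 U2 : set (set nat)} {a1 b1 a2 b2 : nat -> nat}.
Hypotheses (m0 : 0 < m) (n0 : 0 < n).
Hypotheses (h1 : prop53_hyp m n U1 a1 b1) (h2 : prop53_hyp m n U2 a2 b2).
Hypothesis SRa : same_res U1 a1 U2 a2.

Let HU1 := prop53_hyp_uf h1.
Let HU2 := prop53_hyp_uf h2.

(* [t = m * (t %/ m) + t %% m], where [t %% m] solves [t a + n = 0 (mod m)] and
   [a] is invertible modulo [m]. *)
Lemma same_res_mb_quo_of_alphab :
  same_res U1 (Ma_alphab a1 b1) U2 (Ma_alphab a2 b2) ->
  same_res U1 (fun i => mb_quo m (a1 i) (b1 i)) U2 (fun i => mb_quo m (a2 i) (b2 i)).
Proof.
move=> SRab.
have [_ e12 _ _ _] := uholds_coords m0 n0 h1.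
have [_ e22 _ _ _] := uholds_coords m0 n0 h2.
have SRdiv := (same_res_eq HU1 HU2 e12 e22).2 SRab.
have [r [[_ hr1] cop]] : exists r, ures U1 a1 m r /\ coprime r m by case: h1.
have hr2 := same_res_fwd HU1 SRa m0 hr1.
have ltm U a b : nonprincipal_ultrafilter U -> uholds U (fun i => mb_quo m (a i) (b i) %% m < m).
  by move=> HU; apply: (uholds_all HU) => i; rewrite ltn_mod.
have [y1 y1m hy1] := uholds_bounded HU1 (ltm _ a1 b1 HU1).
have [y2 y2m hy2] := uholds_bounded HU2 (ltm _ a2 b2 HU2).
have y12 : y1 = y2.
  apply: (coprime_mul_mod_inj (c := r) _ y1m y2m); first by rewrite coprime_sym.
  apply/eqP; rewrite -(eqn_modDr n); apply/eqP.
  by rewrite (mb_quo_mod_eq m0 n0 h1 hr1 hy1) (mb_quo_mod_eq m0 n0 h2 hr2 hy2).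
rewrite y12 in hy1; have SRmod := same_res_of_const HU1 HU2 hy1 hy2.
have e U a b : nonprincipal_ultrafilter U -> uholds U (fun i =>
    mb_quo m (a i) (b i) %/ m * m + mb_quo m (a i) (b i) %% m = mb_quo m (a i) (b i)).
  by move=> HU; apply: (uholds_all HU) => i; rewrite -divn_eq.
apply/(same_res_eq HU1 HU2 (e _ a1 b1 HU1) (e _ a2 b2 HU2)).
exact: (same_res_add HU1 HU2 (same_res_mul HU1 HU2 SRdiv (same_res_const HU1 HU2 m)) SRmod).
Qed.

Lemma same_kn_quo_const :
  same_res U1 (fun i => mb_quo m (a1 i) (b1 i)) U2 (fun i => mb_quo m (a2 i) (b2 i)) ->
  exists v, uholds U1 (fun i => kn_quo n (a1 i) (b1 i) = v) /\
            uholds U2 (fun i => kn_quo n (a2 i) (b2 i) = v).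
Proof.
move=> SRt; have [_ _ _ _ u_lt] := uholds_coords m0 n0 h1.
have [v vn hv] := uholds_bounded HU1 u_lt; exists v; split=> //.
pose g (a : nat -> nat) i := m + a i * v.
pose K (a b : nat -> nat) i := v + mb_quo m (a i) (b i) * (g a i %/ n).
have SRg : same_res U1 (g a1) U2 (g a2).
  exact: (same_res_add HU1 HU2 (same_res_const HU1 HU2 m)
           (same_res_mul HU1 HU2 SRa (same_res_const HU1 HU2 v))).
have SRK : same_res U1 (K a1 b1) U2 (K a2 b2).
  exact: (same_res_add HU1 HU2 (same_res_const HU1 HU2 v)
           (same_res_mul HU1 HU2 SRt (same_res_divn HU1 HU2 n0 SRg))).
have dvd1 : uholds U1 (fun i => g a1 i %% n = 0 /\ K a1 b1 i %% m = 0).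
  apply: (uholds_std_mono m0 n0 h1 (K := 0) hv) => i hi _ ui.
  have eg : g a1 i = binv (a1 i) (b1 i) * n by rewrite /g (kn_quoP m0 n0 hi) ui addnC mulnC.
  rewrite /K eg mulnK // -ui -(alpha1_quoP m0 n0 hi).
  by rewrite !modnMl.
have dvd2 := same_res_fwd HU1 SRg n0 (uholds_mono HU1 (fun i (d : _ /\ _) => d.1) dvd1).
have dvd3 := same_res_fwd HU1 SRK m0 (uholds_mono HU1 (fun i (d : _ /\ _) => d.2) dvd1).
apply: (uholds_std_mono m0 n0 h2 (K := 0) (uholds_and HU2 dvd2 dvd3)) => i hi _ [d2 d3].
by symmetry; apply: (kn_quo_unique m0 n0 hi vn); apply/eqP.
Qed.

Lemma same_invariants_of_mb_quo :
  same_res U1 (fun i => mb_quo m (a1 i) (b1 i)) U2 (fun i => mb_quo m (a2 i) (b2 i)) ->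
  (forall p q, uholds U1 (fun i => p * a1 i < q * b1 i) <->
               uholds U2 (fun i => p * a2 i < q * b2 i)) ->
  (forall p q, uholds U1 (fun i => p * b1 i < q * alphab (a1 i) (b1 i) + q * a1 i) <->
               uholds U2 (fun i => p * b2 i < q * alphab (a2 i) (b2 i) + q * a2 i)) ->
  same_invariants U1 a1 b1 U2 a2 b2.
Proof.
move=> SRt ord_ab ord_alphab.
have [eb1 eab1 ek1 ea1 _] := uholds_coords m0 n0 h1.
have [eb2 eab2 ek2 ea2 _] := uholds_coords m0 n0 h2.
have [v [hv1 hv2]] := same_kn_quo_const SRt.
have SRu := same_res_of_const HU1 HU2 hv1 hv2.
have SRk : same_res U1 (Mb_beta1 a1 b1) U2 (Mb_beta1 a2 b2).
  apply/(same_res_eq HU1 HU2 ek1 ek2)/(same_res_divn HU1 HU2 n0).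
  exact: (same_res_add HU1 HU2 (same_res_mul HU1 HU2 SRu SRa) (same_res_const HU1 HU2 m)).
split.
  apply/(same_res_eq HU1 HU2 eb1 eb2)/(same_res_divn HU1 HU2 m0).
  exact: (same_res_add HU1 HU2 (same_res_mul HU1 HU2 SRt SRa) (same_res_const HU1 HU2 n)).
split=> //; split.
  apply/(same_res_eq HU1 HU2 ea1 ea2)/(same_res_divn HU1 HU2 m0).
  exact: (same_res_add HU1 HU2 SRu (same_res_mul HU1 HU2 SRt SRk)).
split; first exact/(same_res_eq HU1 HU2 eab1 eab2)/(same_res_divn HU1 HU2 m0).
split=> // p q.
by rewrite (uholds_ltn_beta1_ab m0 n0 h1 p q hv1) (uholds_ltn_beta1_ab m0 n0 h2 p q hv2).
Qed.

Lemma same_q0_cases (R : realType) : q0 R U1 a1 b1 = q0 R U2 a2 b2 ->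
  (exists k, uholds U1 (fun i => mb_quo m (a1 i) (b1 i) = k) /\
             uholds U2 (fun i => mb_quo m (a2 i) (b2 i) = k)) \/
  [/\ forall K, uholds U1 (fun i => K < mb_quo m (a1 i) (b1 i)),
      forall K, uholds U2 (fun i => K < mb_quo m (a2 i) (b2 i))
    & q0 R U1 a1 b1 = 0%R].
Proof.
have mR : (m%:R != 0 :> R)%R by rewrite pnatr_eq0 -lt0n.
have q0_neq0 k : 0 < k -> (m%:R / k%:R != 0 :> R)%R.
  by move=> k0; rewrite mulf_neq0 ?invr_eq0 ?pnatr_eq0 -?lt0n.
case: (uholds_const_or_unbounded HU1 (fun i => mb_quo m (a1 i) (b1 i))) => [[k1 hk1] | ht1];
case: (uholds_const_or_unbounded HU2 (fun i => mb_quo m (a2 i) (b2 i))) => [[k2 hk2] | ht2];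
rewrite ?(q0_fixed m0 n0 h1 hk1) ?(q0_fixed m0 n0 h2 hk2);
rewrite ?(q0_unbounded m0 n0 h1 ht1) ?(q0_unbounded m0 n0 h2 ht2).
- move/(mulfI mR)/invr_inj/eqP; rewrite eqr_nat => /eqP k12.
  by left; exists k1; split; last rewrite k12.
- by move/eqP; rewrite (negbTE (q0_neq0 _ (mb_quo_fixed_gt0 m0 n0 h1 hk1))).
- by move/esym/eqP; rewrite (negbTE (q0_neq0 _ (mb_quo_fixed_gt0 m0 n0 h2 hk2))).
- by right.
Qed.

End TwoLimitSemigroups.

Unset Implicit Arguments. Set Strict Implicit.

Theorem proposition5p3 (R : realType) (m n : nat) :
  (1 <= m)%N -> (1 <= n)%N ->
  (forall (U : set (set nat)) (a b : nat -> nat),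
      prop53_hyp m n U a b ->
      q0 R U a b = 0%R \/
      exists k : nat, (0 < k)%N /\ q0 R U a b = (m%:R / k%:R)%R) /\
  (forall (U1 : set (set nat)) (a1 b1 : nat -> nat)
          (U2 : set (set nat)) (a2 b2 : nat -> nat),
      prop53_hyp m n U1 a1 b1 ->
      prop53_hyp m n U2 a2 b2 ->
      same_res U1 a1 U2 a2 ->
      q0 R U1 a1 b1 = q0 R U2 a2 b2 ->
      (q0 R U1 a1 b1 = 0%R -> same_res U1 (Ma_alphab a1 b1) U2 (Ma_alphab a2 b2)) ->
      same_invariants U1 a1 b1 U2 a2 b2).
Proof.
move=> m0 n0; split=> [U a b h | U1 a1 b1 U2 a2 b2 h1 h2 SRa same_q0 SRab].
  case: (uholds_const_or_unbounded (prop53_hyp_uf h) (fun i => mb_quo m (a i) (b i))).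
  - move=> [k hk]; right; exists k.
    by rewrite (q0_fixed m0 n0 h hk) (mb_quo_fixed_gt0 m0 n0 h hk).
  - by move=> ht; left; apply: (q0_unbounded m0 n0 h ht).
have HU1 := prop53_hyp_uf h1; have HU2 := prop53_hyp_uf h2.
case: (same_q0_cases m0 n0 h1 h2 same_q0) => [[k [hk1 hk2]] | [ht1 ht2 q00]];
  apply: (same_invariants_of_mb_quo m0 n0 h1 h2 SRa).
- exact: (same_res_of_const HU1 HU2 hk1 hk2).
- move=> p q; rewrite (uholds_ltn_pa_qb_fixed m0 n0 h1 p q hk1).
  by rewrite (uholds_ltn_pa_qb_fixed m0 n0 h2 p q hk2).
- move=> p q; rewrite (uholds_ltn_pb_alphab_fixed m0 n0 h1 p q hk1).
  by rewrite (uholds_ltn_pb_alphab_fixed m0 n0 h2 p q hk2).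
- exact: (same_res_mb_quo_of_alphab m0 n0 h1 h2 SRa (SRab q00)).
- move=> p q; rewrite (uholds_ltn_pa_qb_unbounded m0 n0 h1 p q ht1).
  by rewrite (uholds_ltn_pa_qb_unbounded m0 n0 h2 p q ht2).
- move=> p q; rewrite (uholds_ltn_pb_alphab_unbounded m0 n0 h1 p q ht1).
  by rewrite (uholds_ltn_pb_alphab_unbounded m0 n0 h2 p q ht2).
Qed.
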